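(* Let $A\in\mathbb{R}^{m\times m}$ be positive definite, let $B\in\mathbb{R}^{m\times n}$ ($n\le m$) be rank deficient, and let $\alpha\ge0$, $\beta>0$. Then the pseudo-spectral radius of the MGSSP iteration matrix satisfies $\gamma(\mathcal{T}(\alpha,\beta))<1$.
   Context: A real square matrix $A$ is called positive definite if $x^TAx>0$ for all nonzero $x\in\mathbb{R}^m$ ($A$ need not be symmetric). For $\alpha\ge0,\beta>0$ define $\mathcal{P}_{MGSSP}=\begin{pmatrix}\alpha I+2A & 2B\\ -2B^T & \beta I\end{pmatrix}$, $\mathcal{Q}_{MGSSP}=\begin{pmatrix}\alpha I+A & B\\ -B^T & \beta I\end{pmatrix}$, and the MGSSP iteration matrix $\mathcal{T}(\alpha,\beta)=\mathcal{P}_{MGSSP}^{-1}\mathcal{Q}_{MGSSP}$. For a square matrix $T$ with spectrum $\sigma(T)$, the pseudo-spectral radius is $\gamma(T)=\max\{|\lambda|:\lambda\in\sigma(T),\ \lambda\neq1\}$ (taken as $0$ if $\sigma(T)=\{1\}$). *)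

From HB Require Import structures.
From mathcomp Require Import all_boot all_order all_algebra.
Set Implicit Arguments. Unset Strict Implicit. Unset Printing Implicit Defensive.
Import Order.TTheory GRing.Theory Num.Theory.
Local Open Scope ring_scope.

(* C plays the role of the complex numbers; "real" matrices/vectors are those
   whose entries are real (in Num.real). *)
Definition real_mx (C : numClosedFieldType) (p q : nat) (M : 'M[C]_(p, q)) : Prop :=
  forall i j, M i j \is Num.real.

(* A real square matrix A is positive definite: x^T A x > 0 for all real x <> 0
   (A need not be symmetric). *)
Definition pos_def (C : numClosedFieldType) (m : nat) (A : 'M[C]_m) : Prop :=
  real_mx A /\
  forall x : 'cV[C]_m, real_mx x -> x != 0 -> 0 < (x^T *m A *m x) 0 0.

Definition P_MGSSP (C : numClosedFieldType) (m n : nat)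
  (A : 'M[C]_m) (B : 'M[C]_(m, n)) (alpha beta : C) : 'M[C]_(m + n) :=
  block_mx (alpha%:M + 2%:R *: A) (2%:R *: B) (- (2%:R *: B^T)) beta%:M.

Definition Q_MGSSP (C : numClosedFieldType) (m n : nat)
  (A : 'M[C]_m) (B : 'M[C]_(m, n)) (alpha beta : C) : 'M[C]_(m + n) :=
  block_mx (alpha%:M + A) B (- B^T) beta%:M.

Definition T_MGSSP (C : numClosedFieldType) (m n : nat)
  (A : 'M[C]_m) (B : 'M[C]_(m, n)) (alpha beta : C) : 'M[C]_(m + n) :=
  invmx (P_MGSSP A B alpha beta) *m Q_MGSSP A B alpha beta.

(* gamma(T) < r, where gamma(T) = max{ |lambda| : lambda in sigma(T), lambda <> 1 }
   (0 if sigma(T) = {1}); for r > 0 this is exactly: every eigenvalue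
   lambda <> 1 of T has |lambda| < r. *)
Definition pseudo_spectral_radius_lt (C : numClosedFieldType) (p : nat)
  (T : 'M[C]_p) (r : C) : Prop :=
  forall lambda : C, eigenvalue T lambda -> lambda != 1 -> `|lambda| < r.

From HB Require Import structures.
From mathcomp Require Import all_boot all_order all_algebra ring.
Set Implicit Arguments. Unset Strict Implicit. Unset Printing Implicit Defensive.
Import Order.TTheory GRing.Theory Num.Theory.
Local Open Scope ring_scope.
Local Open Scope sesquilinear_scope.

(* If w Q = l w P for a nonzero w = (x, y), pairing the two block rows with
   x^H and (x B)^H and eliminating y gives
     alpha |x|^2 + t (x A x^H) + t^2 |x B|^2 / beta = 0,  t = (1 - 2 l) / (1 - l).
   As Re (x A x^H) > 0, multiplying by conj t and taking real parts forces
   Re t <= 0, and then l = (1 - t) / (2 - t) is strictly inside the unit disc.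
   The same computation with t = 2 shows that P is invertible. *)

Section Scalars.
Variable C : numClosedFieldType.

Lemma quadratic_root_Re_le0 (K b a t : C) :
  0 <= K -> 0 <= b -> 0 < 'Re a -> K + t * a + t ^+ 2 * b = 0 -> 'Re t <= 0.
Proof.
move=> K0 b0 a0 eq0; rewrite real_leNgt ?Creal_Re ?real0 //; apply/negP => t0.
have rK := ger0_real K0; have rb := ger0_real b0.
have t_neq0 : t != 0 by apply: contraTneq t0 => ->; rewrite raddf0 ltxx.
have /(congr1 (fun z => 'Re (t^* * z))) := eq0.
have -> : t^* * (K + t * a + t ^+ 2 * b) = K * t^* + `|t| ^+ 2 * a + `|t| ^+ 2 * b * t.
  by rewrite !normCKC; ring.
rewrite mulr0 raddf0 !raddfD /= ReMl // Re_conj.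
rewrite ReMl ?realX ?normr_real // ReMl ?realM ?realX ?normr_real //.
apply/eqP; rewrite gt_eqF //.
apply: ltr_wpDr; first by rewrite !mulr_ge0 // ltW.
apply: ltr_wpDl; first by rewrite mulr_ge0 // ltW.
by rewrite mulr_gt0 // exprn_gt0 // normr_gt0.
Qed.

Lemma norm_lt1_of_Re_le0 (l t : C) :
  'Re t <= 0 -> l * (2%:R - t) = 1 - t -> `|l| < 1.
Proof.
move=> t_le0 e.
have normB2 (k : nat) : `|k%:R - t| ^+ 2 = (k%:R - 'Re t) ^+ 2 + 'Im t ^+ 2.
  rewrite normC2_Re_Im !raddfB /= (Creal_ReP _ (realn C k)) (Creal_ImP _ (realn C k)).
  by rewrite sub0r sqrrN.
have lt12 : `|1 - t| ^+ 2 < `|2%:R - t| ^+ 2.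
  rewrite (normB2 2) -[1]mulr1n (normB2 1) ltrD2r -subr_gt0.
  have -> : (2%:R - 'Re t) ^+ 2 - (1 - 'Re t) ^+ 2 = 3%:R - 2%:R * 'Re t by ring.
  by apply: ltr_wpDr; rewrite ?ltr0n // oppr_ge0 mulr_ge0_le0.
have two_t_gt0 : 0 < `|2%:R - t| ^+ 2 by apply: le_lt_trans lt12; rewrite exprn_ge0.
rewrite -(expr_lt1 (ltn0Sn 1)) // -(ltr_pM2r two_t_gt0) mul1r -exprMn -normrM.
by rewrite e.
Qed.
End Scalars.

Section RealMatrices.
Variable C : numClosedFieldType.

Lemma real_mxM p q r (M : 'M[C]_(p, q)) (N : 'M[C]_(q, r)) :
  real_mx M -> real_mx N -> real_mx (M *m N).
Proof. by move=> rM rN i j; rewrite mxE rpred_sum // => k _; rewrite rpredM. Qed.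

Lemma real_mx_trmx p q (M : 'M[C]_(p, q)) : real_mx M -> real_mx M^T.
Proof. by move=> rM i j; rewrite mxE. Qed.

Lemma dotmx_self_ge0 p (u : 'rV[C]_p) : 0 <= (u *m u ^t*) 0 0.
Proof. by rewrite -dotmxE dnorm_ge0. Qed.

End RealMatrices.

Section PositiveDefinite.
Variables (C : numClosedFieldType) (m : nat) (A : 'M[C]_m).
Hypothesis pdA : pos_def A.

Lemma real_form (u v : 'rV[C]_m) :
  real_mx u -> real_mx v -> (u *m A *m v^T) 0 0 \is Num.real.
Proof.
by move=> ru rv; exact: real_mxM (real_mxM ru pdA.1) (real_mx_trmx rv) 0 0.
Qed.

Lemma pos_def_form_gt0 (u : 'rV[C]_m) : real_mx u -> u != 0 -> 0 < (u *m A *m u^T) 0 0.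
Proof.
move=> ru u0; have := pdA.2 u^T (real_mx_trmx ru); rewrite trmxK; apply.
by rewrite -(inj_eq (@trmx_inj _ _ _)) trmxK linear0.
Qed.

Lemma pos_def_form_ge0 (u : 'rV[C]_m) : real_mx u -> 0 <= (u *m A *m u^T) 0 0.
Proof.
move=> ru; have [->|u0] := eqVneq u 0; last by rewrite ltW ?pos_def_form_gt0.
by rewrite !mul0mx mxE.
Qed.

Lemma form_rect (p q : 'rV[C]_m) : real_mx p -> real_mx q ->
  ((p + 'i *: q) *m A *m (p + 'i *: q) ^t*) 0 0 =
  (p *m A *m p^T) 0 0 + (q *m A *m q^T) 0 0
  + 'i * ((q *m A *m p^T) 0 0 - (p *m A *m q^T) 0 0).
Proof.
move=> rp rq.
have -> : (p + 'i *: q) ^t* = p^T - 'i *: q^T.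
  by apply/matrixP => i j; rewrite !mxE conjC_rect ?rp ?rq ?mulNr.
rewrite mulmxDl mulmxBr !mulmxDl -!scalemxAl -!scalemxAr.
by rewrite !scalerA -expr2 sqrCi !mxE; ring.
Qed.

(* With x = p + i q for real p, q, the real part is p A p^T + q A q^T. *)
Lemma Re_form_gt0 (x : 'rV[C]_m) : x != 0 -> 0 < 'Re ((x *m A *m x ^t*) 0 0).
Proof.
move=> x0; set p := x ^ (@Re _); set q := x ^ (@Im _).
have rp : real_mx p by move=> i j; rewrite mxE Creal_Re.
have rq : real_mx q by move=> i j; rewrite mxE Creal_Im.
have ex : x = p + 'i *: q by apply/matrixP => i j; rewrite !mxE -Crect.
rewrite ex form_rect // Re_rect ?rpredD ?rpredB ?rpredN ?real_form //.
have [p0|p0] := eqVneq p 0.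
  have q0 : q != 0 by apply: contraNneq x0 => q0; rewrite ex p0 q0 scaler0 addr0.
  by rewrite ltr_wpDl ?pos_def_form_ge0 ?pos_def_form_gt0.
by rewrite ltr_wpDr ?pos_def_form_ge0 ?pos_def_form_gt0.
Qed.

End PositiveDefinite.

Section Pencil.
Variables (C : numClosedFieldType) (m n : nat).
Variables (A : 'M[C]_m) (B : 'M[C]_(m, n)) (alpha beta : C).
Hypotheses (pdA : pos_def A) (rB : real_mx B) (alpha_ge0 : 0 <= alpha) (beta_gt0 : 0 < beta).

Definition mgssp_pencil (p q : C) : 'M[C]_(m + n) :=
  block_mx ((p * alpha)%:M + q *: A) (q *: B) (- (q *: B^T)) (p * beta)%:M.

Lemma P_MGSSP_pencil : P_MGSSP A B alpha beta = mgssp_pencil 1 2%:R.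
Proof. by rewrite /mgssp_pencil !mul1r. Qed.

Lemma Q_MGSSP_sub_pencil (l : C) :
  Q_MGSSP A B alpha beta - l *: P_MGSSP A B alpha beta
  = mgssp_pencil (1 - l) (1 - 2%:R * l).
Proof.
rewrite /Q_MGSSP /P_MGSSP /mgssp_pencil scale_block_mx opp_block_mx add_block_mx.
by congr block_mx; apply/matrixP => i j; rewrite !mxE; try case: (i == j); ring.
Qed.

Lemma mgssp_pencil_kernel (p q : C) (z : 'rV[C]_(m + n)) :
  p != 0 -> z != 0 -> z *m mgssp_pencil p q = 0 -> 'Re (q / p) <= 0.
Proof.
rewrite -[z]hsubmxK; move: (lsubmx z) (rsubmx z) => x y p0 z0.
rewrite mul_row_block -row_mx0 => /eq_row_mx[E1 E2].
have beta0 : beta != 0 by rewrite gt_eqF.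
have [x0|x0] := eqVneq x 0.
  move: E2; rewrite x0 mul0mx add0r mul_mx_scalar => /eqP.
  rewrite scaler_eq0 mulf_eq0 (negbTE p0) (negbTE beta0) /= => /eqP y0.
  by move: z0; rewrite x0 y0 row_mx0 eqxx.
set c := (x *m x ^t*) 0 0; set a := (x *m A *m x ^t*) 0 0.
set b := (x *m B *m (x *m B) ^t*) 0 0; set e := (y *m (x *m B) ^t*) 0 0.
have BT_conj : B^T *m x ^t* = (x *m B) ^t*.
  apply/matrixP => i j; rewrite !mxE rmorph_sum; apply: eq_bigr => k _.
  by rewrite !mxE rmorphM /= (conj_Creal (rB k i)) mulrC.
have S1 : p * alpha * c + q * a - q * e = 0.
  move/(congr1 (fun M => (M *m x ^t*) 0 0)): E1.
  rewrite mul0mx [X in _ = X]mxE => <-.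
  rewrite mulmxDr mul_mx_scalar -scalemxAr mulmxN -scalemxAr !mulmxDl mulNmx.
  by rewrite -!scalemxAl -[y *m _ *m _]mulmxA BT_conj /c /a /e !mxE.
have S2 : q * b + p * beta * e = 0.
  move/(congr1 (fun M => (M *m (x *m B) ^t*) 0 0)): E2.
  rewrite mul0mx [X in _ = X]mxE => <-.
  by rewrite mul_mx_scalar -scalemxAr !mulmxDl -!scalemxAl /b /e !mxE.
apply: (quadratic_root_Re_le0 (K := alpha * c) (b := b / beta) (a := a)).
- by rewrite mulr_ge0 ?dotmx_self_ge0.
- by rewrite divr_ge0 ?dotmx_self_ge0 ?ltW.
- exact: Re_form_gt0.
have -> : alpha * c + q / p * a + (q / p) ^+ 2 * (b / beta)
        = (p * alpha * c + q * a - q * e) / p + (q * b + p * beta * e) * (q / (p ^+ 2 * beta)).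
  by field; rewrite p0 beta0.
by rewrite S1 S2 !mul0r addr0.
Qed.

Lemma P_MGSSP_unit : P_MGSSP A B alpha beta \in unitmx.
Proof.
rewrite unitmxE unitfE; apply/negP => /det0P[z z0].
rewrite P_MGSSP_pencil => /(mgssp_pencil_kernel (oner_neq0 C) z0).
by rewrite divr1 (Creal_ReP _ (realn C 2)) lt_geF ?ltr0n.
Qed.

End Pencil.

Theorem lemma4p3 (C : numClosedFieldType) (m n : nat)
  (A : 'M[C]_m) (B : 'M[C]_(m, n)) (alpha beta : C) :
  pos_def A ->
  real_mx B ->
  (n <= m)%N ->
  (\rank B < n)%N ->
  alpha \is Num.real -> 0 <= alpha ->
  beta \is Num.real -> 0 < beta ->
  pseudo_spectral_radius_lt (T_MGSSP A B alpha beta) 1.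
Proof.
move=> pdA rB _ _ _ alpha_ge0 _ beta_gt0 l /eigenvalueP[v vT v0] l_neq1.
have P_unit := P_MGSSP_unit pdA rB alpha_ge0 beta_gt0.
set w := v *m invmx (P_MGSSP A B alpha beta).
have w0 : w != 0.
  by apply: contraNneq v0 => w0; rewrite -(mulmxKV P_unit v) -/w w0 mul0mx.
have : w *m mgssp_pencil A B alpha beta (1 - l) (1 - 2%:R * l) = 0.
  by rewrite -Q_MGSSP_sub_pencil mulmxBr -mulmxA vT -scalemxAr mulmxKV // subrr.
have l1 : 1 - l != 0 by rewrite subr_eq0 eq_sym.
move=> /(mgssp_pencil_kernel pdA rB alpha_ge0 beta_gt0 l1 w0) Re_le0.
by apply: norm_lt1_of_Re_le0 Re_le0 _; field.
Qed.
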